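(* Let $\epsilon>0$, $R\ge 0$, and let $h:(0,\infty)\to(0,\infty)$, $h(t)=\sinh^{-1}\!\left(\frac{1}{\sinh t}\right)$. Let $[xyvw]$ be a quadrilateral in $\mathbb{H}^n$ (consisting of the geodesic segments $[xy],[yv],[vw],[wx]$) with angles $\angle wxy=\frac{\pi}{2}$, $\angle xyv=\frac{\pi}{2}$ and $\angle xwv\ge\frac{\pi}{2}$. Suppose $d(x,w)\le \frac R2$, $d(y,v)\le\frac R2$ and $d(v,w)\ge h^{-1}(\frac{\epsilon}{2})+R$. Then $d(x,w)\le\frac{\epsilon}{2}$.
   Context: $\mathbb{H}^n$ is real hyperbolic $n$-space with metric $d$; the quadrilateral need not be planar. The function $h$ is a decreasing bijection of $(0,\infty)$. *)

(* real hyperbolic n-space via the hyperboloid model in R^{n+1}. *)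
From Stdlib Require Import Reals Lra.
Open Scope R_scope.

(* A point of R^{n+1} is a function nat -> R whose coordinates beyond n vanish. *)
Definition vec := nat -> R.

Definition mink (n : nat) (x y : vec) : R :=
  - (x 0%nat * y 0%nat) + sum_f 1 n (fun i => x i * y i).

Definition inHn (n : nat) (x : vec) : Prop :=
  mink n x x = -1 /\ 0 < x 0%nat /\ (forall i, (n < i)%nat -> x i = 0).

Definition arcosh (a : R) : R := ln (a + sqrt (a * a - 1)).
Definition arsinh (a : R) : R := ln (a + sqrt (a * a + 1)).

Definition hdist (n : nat) (x y : vec) : R := arcosh (- mink n x y).

(* Tangent vector at x of the geodesic from x towards y (unnormalised). *)
Definition tangent (n : nat) (x y : vec) : vec :=
  fun i => y i + mink n x y * x i.

Definition hangle (n : nat) (y x z : vec) : R :=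
  let u := tangent n x y in
  let w := tangent n x z in
  acos (mink n u w / (sqrt (mink n u u) * sqrt (mink n w w))).

Definition hfun (t : R) : R := arsinh (1 / sinh t).

(* For the quadrilateral [x y v w] write a = d(x,w), b = d(x,y), c = d(y,v),
   e = d(v,w); their hyperbolic cosines are the Gram entries -<x,w>, -<x,y>,
   -<y,v>, -<v,w> of the Minkowski form.  The proof is linear algebra in R^{n+1}
   followed by real inequalities:
   1. the Minkowski form is bilinear and symmetric, satisfies <p,q> <= -1 on
      H^n, and is positive semidefinite (with Cauchy-Schwarz) on the
      orthogonal complement of a point of H^n;
   2. right (resp. obtuse) angles make the Minkowski product of the tangent
      vectors zero (resp. nonpositive);
   3. from this, cosh a cosh e <= cosh b cosh c (obtuse angle at w) and
      (cosh a cosh b cosh c - cosh e)^2 <= sinh^2 a sinh^2 c (Cauchy-Schwarz at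
      x for the tangent vectors of [y v] and [x w]);
   4. these give sinh a sinh b <= 1 and cosh e <= cosh b cosh (a + c);
   5. with t0 = h^{-1}(eps/2) the hypothesis yields e >= t0 + a + c, hence
      b >= t0, hence sinh a <= 1 / sinh t0 = sinh (eps/2), i.e. a <= eps/2. *)
From Stdlib Require Import Reals Lra Psatz.
Open Scope R_scope.

Lemma discriminant_nonpos (al be ga : R) :
  0 <= al -> (forall t, 0 <= al * (t * t) + 2 * be * t + ga) -> be * be <= al * ga.
Proof.
  intros Hal Hq. destruct (Req_dec al 0) as [->|Hal0].
  - destruct (Req_dec be 0) as [->|Hbe]; [lra|].
    specialize (Hq (- (ga + 1) / (2 * be))).
    replace (0 * _ + 2 * be * (- (ga + 1) / (2 * be)) + ga) with (-1) in Hq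
      by (field; auto). lra.
  - specialize (Hq (- be / al)).
    replace (al * (- be / al * (- be / al)) + 2 * be * (- be / al) + ga)
      with ((al * ga - be * be) / al) in Hq by (field; auto).
    assert (Hpos : 0 < al) by lra.
    apply (Rmult_le_compat_r al) in Hq; [|lra].
    unfold Rdiv in Hq. rewrite Rmult_assoc, Rinv_l in Hq by auto. lra.
Qed.

Lemma sum_squares_nonneg (F : nat -> R) (m : nat) :
  0 <= sum_f_R0 (fun k => F k * F k) m.
Proof. apply cond_pos_sum. intros k. nra. Qed.

Lemma sum_cauchy_schwarz (F G : nat -> R) (m : nat) :
  sum_f_R0 (fun k => F k * G k) m * sum_f_R0 (fun k => F k * G k) m
  <= sum_f_R0 (fun k => F k * F k) m * sum_f_R0 (fun k => G k * G k) m.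
Proof.
  apply discriminant_nonpos; [apply sum_squares_nonneg|]. intros t.
  assert (Hexp : sum_f_R0 (fun k => (t * F k + G k) * (t * F k + G k)) m =
    t * t * sum_f_R0 (fun k => F k * F k) m
    + 2 * t * sum_f_R0 (fun k => F k * G k) m + sum_f_R0 (fun k => G k * G k) m).
  { induction m as [|m IH]; simpl; [|rewrite IH]; ring. }
  pose proof (sum_squares_nonneg (fun k => t * F k + G k) m) as Hnn.
  cbv beta in Hnn. rewrite Hexp in Hnn. lra.
Qed.

Definition spatial (n : nat) (p q : vec) : R :=
  sum_f_R0 (fun k => p (k + 1)%nat * q (k + 1)%nat) (n - 1).

Lemma mink_spatial n p q : mink n p q = - (p 0%nat * q 0%nat) + spatial n p q.
Proof. reflexivity. Qed.

Lemma spatial_cauchy_schwarz n p q :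
  spatial n p q * spatial n p q <= spatial n p p * spatial n q q.
Proof. apply sum_cauchy_schwarz. Qed.

Lemma spatial_nonneg n p : 0 <= spatial n p p.
Proof. apply sum_squares_nonneg. Qed.

Lemma mink_sym n p q : mink n p q = mink n q p.
Proof.
  rewrite !mink_spatial. unfold spatial.
  rewrite (sum_eq _ (fun k => q (k + 1)%nat * p (k + 1)%nat)) by (intros; ring).
  ring.
Qed.

Lemma mink_comb_l n p q r c :
  mink n (fun i => p i + c * q i) r = mink n p r + c * mink n q r.
Proof.
  rewrite !mink_spatial. unfold spatial.
  rewrite (sum_eq _ (fun k => p (k + 1)%nat * r (k + 1)%nat
                            + q (k + 1)%nat * r (k + 1)%nat * c)) by (intros; ring).
  rewrite plus_sum, <- scal_sum. ring.
Qed.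

Lemma mink_comb_r n p q r c :
  mink n r (fun i => p i + c * q i) = mink n r p + c * mink n r q.
Proof. rewrite mink_sym, mink_comb_l, (mink_sym n p), (mink_sym n q). reflexivity. Qed.

Lemma mink_perp_nonneg n p s : inHn n p -> mink n p s = 0 -> 0 <= mink n s s.
Proof.
  intros [Hpp [Hp0 _]] Hps. rewrite mink_spatial in *.
  pose proof (spatial_cauchy_schwarz n p s) as CS.
  pose proof (spatial_nonneg n s). pose proof (spatial_nonneg n p).
  assert (Hsp : spatial n p s = p 0%nat * s 0%nat) by lra.
  assert (Hnorm : spatial n p p = p 0%nat * p 0%nat - 1) by lra.
  rewrite Hsp, Hnorm in CS.
  assert (Hsq : s 0%nat * s 0%nat <= spatial n s s).
  { apply (Rmult_le_reg_l (p 0%nat * p 0%nat)); nra. }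
  lra.
Qed.

Lemma mink_perp_cauchy_schwarz n p s t :
  inHn n p -> mink n p s = 0 -> mink n p t = 0 ->
  mink n s t * mink n s t <= mink n s s * mink n t t.
Proof.
  intros Hp Hs Ht. apply discriminant_nonpos; [apply (mink_perp_nonneg n p); auto|].
  intros l.
  assert (Hperp : mink n p (fun i => t i + l * s i) = 0) by (rewrite mink_comb_r; nra).
  pose proof (mink_perp_nonneg n p _ Hp Hperp) as Hq.
  rewrite mink_comb_l, !mink_comb_r, (mink_sym n t s) in Hq. nra.
Qed.

Lemma mink_tangent n a p b q :
  mink n (tangent n a p) (tangent n b q) =
  mink n p q + mink n b q * mink n p b + mink n a p * mink n a q
  + mink n a p * mink n b q * mink n a b.
Proof. unfold tangent. rewrite mink_comb_l, !mink_comb_r. ring. Qed.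

Lemma tangent_inner n x p q : inHn n x ->
  mink n (tangent n x p) (tangent n x q) = mink n p q + mink n x p * mink n x q.
Proof.
  intros [Hxx _]. rewrite mink_tangent, Hxx, (mink_sym n p x). ring.
Qed.

Lemma tangent_perp n x y : inHn n x -> mink n x (tangent n x y) = 0.
Proof.
  intros [Hxx _]. unfold tangent. rewrite mink_comb_r, Hxx, (mink_sym n x y). ring.
Qed.

Lemma mink_points_le n p q : inHn n p -> inHn n q -> mink n p q <= -1.
Proof.
  intros Hp Hq.
  pose proof (mink_perp_nonneg n p _ Hp (tangent_perp n p q Hp)) as Htan.
  rewrite tangent_inner in Htan by auto.
  assert (Hneg : mink n p q < 0).
  { destruct Hp as [Hpp [Hp0 _]], Hq as [Hqq [Hq0 _]]. rewrite !mink_spatial in *.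
    pose proof (spatial_cauchy_schwarz n p q) as CS.
    pose proof (spatial_nonneg n p). pose proof (spatial_nonneg n q).
    replace (spatial n p p) with (p 0%nat * p 0%nat - 1) in CS by lra.
    replace (spatial n q q) with (q 0%nat * q 0%nat - 1) in CS by lra.
    assert (0 < p 0%nat * q 0%nat) by nra. nra. }
  destruct Hq as [Hqq _]. rewrite Hqq in Htan. nra.
Qed.

Lemma acos_ge_half_pi s : PI / 2 <= acos s -> s <= 0.
Proof.
  unfold acos. pose proof PI_RGT_0.
  destruct (Rle_dec s (-1)); [lra|]. destruct (Rle_dec 1 s); [lra|].
  intros Hge. destruct (Rle_or_lt s 0) as [|Hs]; auto.
  assert (0 < sqrt (1 - s²)) by (apply sqrt_lt_R0; unfold Rsqr; nra).
  assert (Hpos : 0 < s / sqrt (1 - s²)) by (apply Rdiv_lt_0_compat; auto).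
  pose proof (atan_increasing _ _ Hpos). rewrite atan_0 in *. lra.
Qed.

Lemma acos_eq_half_pi s : acos s = PI / 2 -> s = 0.
Proof.
  intros H. assert (s <= 0) by (apply acos_ge_half_pi; lra).
  assert (- s <= 0) by (apply acos_ge_half_pi; rewrite acos_opp; lra). lra.
Qed.

(* The product of two tangent vectors at x is their cosine times their
   lengths; when a length vanishes the product vanishes by Cauchy-Schwarz. *)
Lemma tangent_mink_cos n y x z : inHn n x ->
  let u := tangent n x y in let w := tangent n x z in
  let D := sqrt (mink n u u) * sqrt (mink n w w) in
  mink n u w = mink n u w / D * D /\ 0 <= D.
Proof.
  intros Hx u w D.
  assert (Hu : mink n x u = 0) by apply tangent_perp, Hx.
  assert (Hw : mink n x w = 0) by apply tangent_perp, Hx.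
  pose proof (mink_perp_cauchy_schwarz n x u w Hx Hu Hw) as CS.
  split; [|unfold D; pose proof (sqrt_pos (mink n u u));
           pose proof (sqrt_pos (mink n w w)); nra].
  destruct (Req_dec D 0) as [HD|HD]; [|field; auto].
  unfold D in HD |- *. rewrite HD, Rmult_0_r.
  apply Rmult_integral in HD as [HD|HD]; apply sqrt_eq_0 in HD;
    try (apply (mink_perp_nonneg n x); auto); rewrite HD in CS; nra.
Qed.

Lemma right_angle_mink n y x z : inHn n x -> hangle n y x z = PI / 2 ->
  mink n (tangent n x y) (tangent n x z) = 0.
Proof.
  intros Hx Hang. destruct (tangent_mink_cos n y x z Hx) as [Hcos _].
  unfold hangle in Hang. apply acos_eq_half_pi in Hang.
  rewrite Hcos, Hang. ring.
Qed.

Lemma obtuse_angle_mink n y x z : inHn n x -> PI / 2 <= hangle n y x z ->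
  mink n (tangent n x y) (tangent n x z) <= 0.
Proof.
  intros Hx Hang. destruct (tangent_mink_cos n y x z Hx) as [Hcos HD].
  unfold hangle in Hang. apply acos_ge_half_pi in Hang.
  rewrite Hcos. nra.
Qed.

Lemma quadrilateral_gram n x y v w :
  inHn n x -> inHn n y -> inHn n v -> inHn n w ->
  hangle n w x y = PI / 2 -> hangle n x y v = PI / 2 -> PI / 2 <= hangle n x w v ->
  let A := - mink n x w in let B := - mink n x y in
  let C := - mink n y v in let E := - mink n v w in
  A * E <= B * C /\ (A * B * C - E) * (A * B * C - E) <= (A * A - 1) * (C * C - 1).
Proof.
  intros Hx Hy Hv Hw Ax Ay Aw A B C E.
  apply right_angle_mink in Ax; auto. apply right_angle_mink in Ay; auto.
  apply obtuse_angle_mink in Aw; auto.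
  rewrite tangent_inner in Ax, Ay, Aw by auto.
  rewrite (mink_sym n w y) in Ax. rewrite (mink_sym n y x) in Ay.
  rewrite (mink_sym n w x), (mink_sym n w v) in Aw.
  assert (Hperp : mink n x (tangent n y v) = 0).
  { unfold tangent. rewrite mink_comb_r. lra. }
  pose proof (mink_perp_cauchy_schwarz n x _ _ Hx Hperp (tangent_perp n x w Hx)) as CS.
  rewrite !tangent_inner, mink_tangent in CS by auto.
  rewrite (mink_sym n v x), (mink_sym n y x) in CS.
  destruct Hv as [Hvv _], Hw as [Hww _]. rewrite Hvv, Hww in CS.
  unfold A, B, C, E. split; nra.
Qed.

Lemma gram_sinh_bound A B C E :
  1 <= A -> 1 <= B -> 1 <= C -> 1 <= E -> A * E <= B * C ->
  (A * B * C - E) * (A * B * C - E) <= (A * A - 1) * (C * C - 1) ->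
  (A * A - 1) * (B * B - 1) <= 1.
Proof.
  intros HA HB HC HE Hobt CS. set (S := A * B * C - E) in *.
  assert (HS : B * C * (A * A - 1) <= A * S) by (unfold S; nra).
  destruct (Req_dec A 1) as [->|HA1]; [nra|].
  assert (0 < A * A - 1) by nra.
  assert (HS2 : (B * C * (A * A - 1)) * (B * C * (A * A - 1)) <= (A * S) * (A * S))
    by (apply Rmult_le_compat; nra).
  assert (HBC : (B * C) * (B * C) * (A * A - 1) <= A * A * (C * C - 1))
    by (apply (Rmult_le_reg_l (A * A - 1)); nra).
  assert (B * B * (A * A - 1) <= A * A) by (apply (Rmult_le_reg_l (C * C)); nra).
  nra.
Qed.

Lemma gram_cosh_bound A B C E sa sc :
  1 <= A -> 1 <= B -> 1 <= C -> 0 <= sa -> 0 <= sc ->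
  sa * sa = A * A - 1 -> sc * sc = C * C - 1 ->
  (A * B * C - E) * (A * B * C - E) <= (A * A - 1) * (C * C - 1) ->
  E <= B * (A * C + sa * sc).
Proof.
  intros HA HB HC Hsa Hsc Ha Hc CS.
  assert (Hdev : A * B * C - E >= - (sa * sc)).
  { apply Rnot_lt_ge. intros Hlt.
    assert (0 <= sa * sc) by nra.
    assert (0 < (E - A * B * C - sa * sc) * (E - A * B * C + sa * sc))
      by (apply Rmult_lt_0_compat; lra).
    nra. }
  assert (0 <= (B - 1) * (sa * sc)) by (apply Rmult_le_pos; nra).
  nra.
Qed.

Lemma cosh_sinh_sq u : cosh u * cosh u - sinh u * sinh u = 1.
Proof. unfold cosh, sinh. rewrite exp_Ropp. pose proof (exp_pos u). field; lra. Qed.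

Lemma cosh_add u t : cosh (u + t) = cosh u * cosh t + sinh u * sinh t.
Proof. unfold cosh, sinh. rewrite Ropp_plus_distr, !exp_plus. field. Qed.

Lemma sinh_nonneg u : 0 <= u -> 0 <= sinh u.
Proof. intros [Hu|<-]; [rewrite <- sinh_0; left; apply sinh_lt; auto|rewrite sinh_0; lra]. Qed.

Lemma sinh_le_inv u t : sinh u <= sinh t -> u <= t.
Proof. intros H. destruct (Rle_or_lt u t) as [|Hlt]; auto. apply sinh_lt in Hlt. lra. Qed.

Lemma cosh_pos u : 0 < cosh u.
Proof. unfold cosh. pose proof (exp_pos u). pose proof (exp_pos (- u)). lra. Qed.

Lemma cosh_le u t : 0 <= u -> u <= t -> cosh u <= cosh t.
Proof.
  intros Hu Hut. pose proof (sinh_nonneg u Hu).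
  assert (sinh u <= sinh t) by (destruct Hut as [Hlt|<-]; [left; apply sinh_lt|]; lra).
  pose proof (cosh_sinh_sq u). pose proof (cosh_sinh_sq t).
  pose proof (cosh_pos u). pose proof (cosh_pos t). nra.
Qed.

Lemma sinh_le_of_cosh_le u t : 0 <= u -> 0 <= t -> cosh u <= cosh t -> sinh u <= sinh t.
Proof.
  intros Hu Ht Hc. pose proof (sinh_nonneg u Hu). pose proof (sinh_nonneg t Ht).
  pose proof (cosh_sinh_sq u). pose proof (cosh_sinh_sq t). pose proof (cosh_pos u).
  assert (cosh u * cosh u <= cosh t * cosh t) by nra. nra.
Qed.

Lemma arcosh_spec A : 1 <= A -> cosh (arcosh A) = A /\ 0 <= arcosh A.
Proof.
  intros HA. set (s := sqrt (A * A - 1)).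
  assert (Hs : 0 <= s) by apply sqrt_pos.
  assert (Hss : s * s = A * A - 1) by (apply sqrt_sqrt; nra).
  assert (Hexp : exp (arcosh A) = A + s) by (apply exp_ln; lra).
  assert (Hexpm : exp (- arcosh A) = A - s).
  { rewrite exp_Ropp, Hexp. field_simplify_eq; [nra|lra]. }
  split; [unfold cosh; rewrite Hexp, Hexpm; field|].
  rewrite <- ln_1. unfold arcosh. fold s.
  destruct (Req_dec (A + s) 1) as [->|Hne]; [lra|left; apply ln_increasing; lra].
Qed.

Lemma hdist_spec n p q : inHn n p -> inHn n q ->
  let d := hdist n p q in
  0 <= d /\ cosh d = - mink n p q /\ 1 <= cosh d /\
  0 <= sinh d /\ sinh d * sinh d = cosh d * cosh d - 1.
Proof.
  intros Hp Hq d. pose proof (mink_points_le n p q Hp Hq).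
  destruct (arcosh_spec (- mink n p q)) as [Hcosh Hnn]; [lra|].
  change (arcosh (- mink n p q)) with d in Hcosh, Hnn.
  pose proof (cosh_sinh_sq d).
  repeat split; try lra. apply sinh_nonneg; auto.
Qed.

Lemma hfun_inverse s : 0 < s ->
  let t0 := arcsinh (1 / sinh s) in
  0 < t0 /\ hfun t0 = s /\ sinh t0 * sinh s = 1.
Proof.
  intros Hs t0. assert (Hss : 0 < sinh s) by (rewrite <- sinh_0; apply sinh_lt; auto).
  assert (Ht0 : sinh t0 = 1 / sinh s) by apply sinh_arcsinh.
  repeat split.
  - unfold t0. rewrite <- arcsinh_0. apply arcsinh_lt, Rdiv_lt_0_compat; lra.
  - unfold hfun, arsinh. rewrite Ht0.
    replace (1 / (1 / sinh s)) with (sinh s) by (field; lra).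
    transitivity (arcsinh (sinh s)); [|apply arcsinh_sinh].
    unfold arcsinh. do 3 f_equal. ring.
  - rewrite Ht0. field. lra.
Qed.

Lemma quadrilateral_side_bounds n x y v w :
  inHn n x -> inHn n y -> inHn n v -> inHn n w ->
  hangle n w x y = PI / 2 -> hangle n x y v = PI / 2 -> PI / 2 <= hangle n x w v ->
  let a := hdist n x w in let b := hdist n x y in
  let c := hdist n y v in let e := hdist n v w in
  sinh a * sinh b <= 1 /\ cosh e <= cosh b * cosh (a + c).
Proof.
  intros Hx Hy Hv Hw Ax Ay Aw. cbv zeta.
  destruct (quadrilateral_gram n x y v w Hx Hy Hv Hw Ax Ay Aw) as [Hobt CS].
  destruct (hdist_spec n x w Hx Hw) as [_ [ca [ca1 [sa0 sa]]]].
  destruct (hdist_spec n x y Hx Hy) as [_ [cb [cb1 [sb0 sb]]]].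
  destruct (hdist_spec n y v Hy Hv) as [_ [cc [cc1 [sc0 sc]]]].
  destruct (hdist_spec n v w Hv Hw) as [_ [ce [ce1 _]]].
  rewrite <- ca, <- cb, <- cc, <- ce in Hobt, CS.
  set (a := hdist n x w) in *. set (b := hdist n x y) in *.
  set (c := hdist n y v) in *. set (e := hdist n v w) in *.
  split.
  - pose proof (gram_sinh_bound _ _ _ _ ca1 cb1 cc1 ce1 Hobt CS) as Hab.
    rewrite <- sa, <- sb in Hab.
    replace (sinh a * sinh a * (sinh b * sinh b)) with
      ((sinh a * sinh b) * (sinh a * sinh b)) in Hab by ring.
    assert (0 <= sinh a * sinh b) by (apply Rmult_le_pos; lra). nra.
  - rewrite cosh_add. exact (gram_cosh_bound _ _ _ _ _ _ ca1 cb1 cc1 sa0 sc0 sa sc CS).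
Qed.

Lemma long_side_bound a b c e t0 :
  0 <= a -> 0 <= b -> 0 <= c -> 0 < t0 ->
  t0 + (a + c) <= e -> cosh e <= cosh b * cosh (a + c) -> sinh t0 <= sinh b.
Proof.
  intros Ha Hb Hc Ht0 He Hcosh.
  pose proof (cosh_le (t0 + (a + c)) e ltac:(lra) He) as Hle.
  rewrite cosh_add in Hle.
  assert (0 <= sinh t0 * sinh (a + c))
    by (apply Rmult_le_pos; apply sinh_nonneg; lra).
  apply sinh_le_of_cosh_le; try lra.
  pose proof (cosh_pos (a + c)).
  apply (Rmult_le_reg_r (cosh (a + c))); lra.
Qed.

Theorem mainTheorem5 (n : nat) (eps R0 : R) (x y v w : vec) :
  0 < eps -> 0 <= R0 ->
  inHn n x -> inHn n y -> inHn n v -> inHn n w ->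
  x <> y -> y <> v -> v <> w -> w <> x ->
  hangle n w x y = PI / 2 ->
  hangle n x y v = PI / 2 ->
  PI / 2 <= hangle n x w v ->
  hdist n x w <= R0 / 2 ->
  hdist n y v <= R0 / 2 ->
  (forall t0 : R, 0 < t0 -> hfun t0 = eps / 2 -> hdist n v w >= t0 + R0) ->
  hdist n x w <= eps / 2.
Proof.
  intros Heps HR Hx Hy Hv Hw _ _ _ _ Ax Ay Aw Ha Hc Hyp.
  destruct (quadrilateral_side_bounds n x y v w Hx Hy Hv Hw Ax Ay Aw) as [Hab Hcosh].
  destruct (hdist_spec n x w Hx Hw) as [a0 _].
  destruct (hdist_spec n x y Hx Hy) as [b0 _].
  destruct (hdist_spec n y v Hy Hv) as [c0 _].
  set (a := hdist n x w) in *. set (b := hdist n x y) in *.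
  set (c := hdist n y v) in *. set (e := hdist n v w) in *.
  destruct (hfun_inverse (eps / 2) ltac:(lra)) as [Ht0 [Hh Hinv]].
  set (t0 := arcsinh (1 / sinh (eps / 2))) in *.
  assert (Hsb : sinh t0 <= sinh b).
  { apply (long_side_bound a b c e t0); auto. specialize (Hyp t0 Ht0 Hh). lra. }
  (* hence sinh a <= 1 / sinh t0 = sinh (eps / 2) *)
  assert (Hsat : sinh a * sinh t0 <= 1).
  { assert (0 <= sinh a * (sinh b - sinh t0))
      by (apply Rmult_le_pos; [apply sinh_nonneg|]; lra). nra. }
  apply sinh_le_inv.
  pose proof (sinh_nonneg (eps / 2) ltac:(lra)).
  replace (sinh a) with (sinh a * sinh t0 * sinh (eps / 2)) by (rewrite Rmult_assoc, Hinv; ring).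
  nra.
Qed.
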